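(* Let $n\ge3$, $\tau>0$, $\varepsilon\neq0$, and $\kappa\in so(n)$ fixed. Consider the generalized Demchenko case without twisting: curves $(\omega(t),\gamma(t))\in so(n)\times S^{n-1}$ with $\omega\in\mathbb R^n\wedge\gamma$ satisfying $$\tau\dot\omega=[\kappa,\omega]+\lambda_0,\qquad \dot\gamma=-\varepsilon\omega\gamma,$$ where $\lambda_0(t)\in so(n)$ is orthogonal to $\mathbb R^n\wedge\gamma$ (and is determined by the condition $\omega\in\mathbb R^n\wedge\gamma$). These equations reduce to the system on $T^*S^{n-1}=\{(\gamma,p):\langle\gamma,\gamma\rangle=1,\langle\gamma,p\rangle=0\}$ $$\dot\gamma=\frac{\varepsilon^2}\tau p,\qquad \dot p=\frac1\tau\kappa p+\mu\gamma,\qquad \mu=\frac1\tau\langle p,\kappa\gamma\rangle-\frac{\varepsilon^2}\tau\langle p,p\rangle,$$ which is the magnetic geodesic flow with Hamiltonian $h=\frac{\varepsilon^2}{2\tau}\langle p,p\rangle$ with respect to the Poisson bracket $$\{F,G\}_d=\{F,G\}^\kappa-\frac{\{F,\phi_1\}^\kappa\{G,\phi_2\}^\kappa-\{F,\phi_2\}^\kappa\{G,\phi_1\}^\kappa}{\{\phi_1,\phi_2\}^\kappa},$$ restricted to $T^*S^{n-1}$, where $\phi_1=\langle\gamma,\gamma\rangle$, $\phi_2=\langle\gamma,p\rangle$ and $\{F,G\}^\kappa=\sum_i\big(\frac{\partial F}{\partial\gamma_i}\frac{\partial G}{\partial p_i}-\frac{\partial F}{\partial p_i}\frac{\partial G}{\partial\gamma_i}\big)+\frac1{\varepsilon^2}\sum_{i,j}\kappa_{ij}\frac{\partial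 F}{\partial p_i}\frac{\partial G}{\partial p_j}$.
   Context: Physically: a balanced $n$-dimensional ball with gyroscope rolls without slipping and twisting over a fixed sphere, with $\varepsilon=b/(b\pm a)$ ($a,b$ the radii), and the modified inertia operator is $\mathbf I=\tau\,\mathrm{Id}_{so(n)}$. On $so(n)$, $\langle X,Y\rangle=-\frac12\operatorname{tr}(XY)$; on $\mathbb R^n$ the Euclidean product; $x\wedge y=xy^T-yx^T$; $\mathbb R^n\wedge\gamma=\{x\wedge\gamma:x\in\mathbb R^n\}$; $\kappa_{ij}$ are the entries of $\kappa$. ''Reduce'' means: for a solution, $p=\frac\tau{\varepsilon^2}\dot\gamma$ and $(\gamma,p)$ solves the stated system. *)

From HB Require Import structures.
From mathcomp Require Import all_boot all_order all_algebra.
From mathcomp Require Import all_classical all_reals all_analysis.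
Set Implicit Arguments. Unset Strict Implicit. Unset Printing Implicit Defensive.
Import Order.TTheory GRing.Theory Num.Theory.
Import numFieldNormedType.Exports.
Local Open Scope ring_scope.

Section Defs.
Variables (R : realType) (n : nat).

Definition so (A : 'M[R]_n) : Prop := A^T = - A.

Definition ip (x y : 'cV[R]_n) : R := (x^T *m y) 0 0.

Definition ipso (X Y : 'M[R]_n) : R := - (2%:R)^-1 * \tr (X *m Y).

Definition wedge (x y : 'cV[R]_n) : 'M[R]_n := x *m y^T - y *m x^T.

Definition comm (A B : 'M[R]_n) : 'M[R]_n := A *m B - B *m A.

Definition evec (i : 'I_n) : 'cV[R]_n := delta_mx i 0.

Definition mx_deriv m k (f : R -> 'M[R]_(m, k)) (t : R) (df : 'M[R]_(m, k)) : Prop :=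
  forall i j, is_derive t (1 : R) (fun s => f s i j) (df i j).

Definition dgam (F : 'cV[R]_n -> 'cV[R]_n -> R) (i : 'I_n) g p : R :=
  derive1 (fun s : R => F (g + s *: evec i) p) 0.
Definition dp (F : 'cV[R]_n -> 'cV[R]_n -> R) (i : 'I_n) g p : R :=
  derive1 (fun s : R => F g (p + s *: evec i)) 0.

Definition kbracket (eps : R) (kappa : 'M[R]_n) (F G : 'cV[R]_n -> 'cV[R]_n -> R)
  (g p : 'cV[R]_n) : R :=
  \sum_i (dgam F i g p * dp G i g p - dp F i g p * dgam G i g p)
  + (eps ^+ 2)^-1 * \sum_i \sum_j kappa i j * dp F i g p * dp G j g p.

Definition phi1 (g p : 'cV[R]_n) : R := ip g g.
Definition phi2 (g p : 'cV[R]_n) : R := ip g p.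

Definition dbracket (eps : R) (kappa : 'M[R]_n) (F G : 'cV[R]_n -> 'cV[R]_n -> R)
  (g p : 'cV[R]_n) : R :=
  kbracket eps kappa F G g p
  - (kbracket eps kappa F phi1 g p * kbracket eps kappa G phi2 g p
     - kbracket eps kappa F phi2 g p * kbracket eps kappa G phi1 g p)
    / kbracket eps kappa phi1 phi2 g p.

Definition ham (eps tau : R) (g p : 'cV[R]_n) : R := eps ^+ 2 / (2%:R * tau) * ip p p.

Definition gcoord (i : 'I_n) (g p : 'cV[R]_n) : R := g i 0.
Definition pcoord (i : 'I_n) (g p : 'cV[R]_n) : R := p i 0.

End Defs.

From HB Require Import structures.
From mathcomp Require Import all_boot all_order all_algebra.
From mathcomp Require Import all_classical all_reals all_analysis.
From mathcomp Require Import ring.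
Import Order.TTheory GRing.Theory Num.Theory.
Import numFieldNormedType.Exports.
Local Open Scope ring_scope.
Local Open Scope classical_set_scope.
Set Implicit Arguments. Unset Strict Implicit.

(* Write omega = x /\ gamma. Being skew and orthogonal to R^n /\ gamma, lambda0
   kills gamma, and p = -(tau/eps) omega gamma = -(tau/eps) (x - <x,gamma> gamma)
   is tangent to the sphere. Differentiating p with the equation of motion, every
   product with omega reduces to a combination of x and gamma, which yields
   p' = kappa p / tau + mu gamma. On the other side, the gradients of the
   coordinate functions, of h and of the constraints phi1, phi2 are explicit, so
   all brackets {.,.}^kappa are inner products; on T*S^{n-1} one has
   {phi1,phi2}^kappa = 2 and {h,phi1}^kappa = 0, and the Dirac correction of
   {p_i,h}^kappa is exactly the multiplier term mu gamma_i. *)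

Lemma derive1_quadratic (R : realType) (f : R -> R) (a b c : R) :
  (forall s, f s = a + s * b + s ^+ 2 * c) -> derive1 f 0 = b.
Proof.
move=> fE.
have -> : f = cst a + b \*: (@id R) + c \*: (@id R) ^+ 2.
  by apply/funext => s; rewrite fE /= !fctE /= /GRing.scale /=; ring.
have d_id := is_derive_id (0 : R) (1 : R).
have df := is_deriveD (is_deriveD (is_derive_cst a (0 : R) (1 : R))
  (is_deriveZ b d_id)) (is_deriveZ c (is_deriveX 2 d_id)).
rewrite derive1E (derive_val (is_derive := df)).
by rewrite /GRing.scale /=; ring.
Qed.

Section MatrixCurveDerivative.
Variable R : realType.

Lemma mx_deriv_mulmx m k l (A : R -> 'M[R]_(m, k)) (B : R -> 'M[R]_(k, l))
    t dA dB :
  mx_deriv A t dA -> mx_deriv B t dB ->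
  mx_deriv (fun s => A s *m B s) t (dA *m B t + A t *m dB).
Proof.
move=> dA_t dB_t i j.
have -> : (fun s => (A s *m B s) i j)
    = \sum_r ((fun s => A s i r) * (fun s => B s r j)).
  by apply/funext => s; rewrite fct_sumE mxE.
have d_prod r : is_derive t 1 ((fun s => A s i r) * (fun s => B s r j))
    (A t i r *: dB r j + B t r j *: dA i r) by apply: is_deriveM.
apply: is_derive_eq (is_derive_sum d_prod) _; rewrite !mxE -big_split /=.
by apply: eq_bigr => r _; rewrite /GRing.scale /=; ring.
Qed.

Lemma mx_derivZ m k (A : R -> 'M[R]_(m, k)) t dA (c : R) :
  mx_deriv A t dA -> mx_deriv (fun s => c *: A s) t (c *: dA).
Proof.
move=> dA_t i j.
have -> : (fun s => (c *: A s) i j) = c *: (fun s => A s i j).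
  by apply/funext => s; rewrite !mxE.
by rewrite mxE; apply: is_deriveZ.
Qed.

Lemma mx_deriv_near m k (A B : R -> 'M[R]_(m, k)) t dA :
  (\forall s \near t, A s = B s) -> mx_deriv A t dA -> mx_deriv B t dA.
Proof.
move=> AB dA_t i j; apply: near_eq_is_derive (dA_t i j).
by apply: filterS AB => s ->.
Qed.

End MatrixCurveDerivative.

Section InnerProduct.
Variables (R : realType) (n : nat).
Implicit Types (a b c u w x y z g : 'cV[R]_n) (A L : 'M[R]_n).

Lemma ipE a b : ip a b = \sum_k a k 0 * b k 0.
Proof. by rewrite /ip !mxE; apply: eq_bigr => k _; rewrite mxE. Qed.

Lemma ipC a b : ip a b = ip b a.
Proof. by rewrite !ipE; apply: eq_bigr => k _; rewrite mulrC. Qed.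

Lemma ipDr a b c : ip a (b + c) = ip a b + ip a c.
Proof. by rewrite !ipE -big_split; apply: eq_bigr => k _; rewrite mxE mulrDr. Qed.

Lemma ipZr a b (k : R) : ip a (k *: b) = k * ip a b.
Proof. by rewrite !ipE mulr_sumr; apply: eq_bigr => j _; rewrite mxE mulrCA. Qed.

Lemma ip0r a : ip a 0 = 0.
Proof. by rewrite -(scale0r 0) ipZr mul0r. Qed.

Lemma ipNr a b : ip a (- b) = - ip a b.
Proof. by rewrite -scaleN1r ipZr mulN1r. Qed.

Lemma ipBr a b c : ip a (b - c) = ip a b - ip a c.
Proof. by rewrite ipDr ipNr. Qed.

Lemma ipDl a b c : ip (b + c) a = ip b a + ip c a.
Proof. by rewrite ipC ipDr ![ip a _]ipC. Qed.

Lemma ipZl a b (k : R) : ip (k *: b) a = k * ip b a.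
Proof. by rewrite ipC ipZr ipC. Qed.

Lemma ip0l a : ip 0 a = 0.
Proof. by rewrite ipC ip0r. Qed.

Lemma ipBl a b c : ip (b - c) a = ip b a - ip c a.
Proof. by rewrite ipC ipBr ![ip a _]ipC. Qed.

Lemma ip_evecl j b : ip (evec R j) b = b j 0.
Proof.
rewrite ipE (bigD1 j) //= big1 ?addr0 => [|k /negbTE k_neq_j].
  by rewrite !mxE !eqxx mul1r.
by rewrite !mxE k_neq_j mul0r.
Qed.

Lemma ip_evecr j a : ip a (evec R j) = a j 0.
Proof. by rewrite ipC ip_evecl. Qed.

Lemma ip_self_eq0 z : ip z z = 0 -> z = 0.
Proof.
rewrite ipE => zz0; apply/matrixP => k j; rewrite (ord1 j) mxE.
have /eqP : z k 0 * z k 0 = 0.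
  by apply: (psumr_eq0P _ zz0) => // i _; rewrite -expr2 sqr_ge0.
by rewrite mulf_eq0 orbb => /eqP.
Qed.

Lemma ip_mulmx_trmx a A b : ip a (A *m b) = ip b (A^T *m a).
Proof.
have -> : ip a (A *m b) = ((a^T *m (A *m b))^T) 0 0 by rewrite mxE.
by rewrite /ip !trmx_mul trmxK mulmxA.
Qed.

Lemma ip_skew_self A g : so A -> ip g (A *m g) = 0.
Proof.
move=> skewA; have /eqP : ip g (A *m g) = - ip g (A *m g).
  by rewrite {1}ip_mulmx_trmx skewA mulNmx ipNr.
by rewrite -addr_eq0 -mulr2n mulrn_eq0 /= => /eqP.
Qed.

Lemma mulmx_ip m (y : 'M[R]_(m, 1)) a b : y *m (a^T *m b) = ip a b *: y.
Proof. by rewrite [a^T *m b]mx11_scalar mul_mx_scalar. Qed.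

Lemma wedge_mulmx x g y : wedge x g *m y = ip g y *: x - ip x y *: g.
Proof. by rewrite /wedge mulmxBl -!mulmxA !mulmx_ip. Qed.

Lemma so_wedge x y : so (wedge x y).
Proof. by rewrite /so /wedge linearB /= !trmx_mul !trmxK opprB. Qed.

Lemma mxtrace_mul_outer A u w : \tr (A *m (u *m w^T)) = ip w (A *m u).
Proof. by rewrite mulmxA mxtrace_mulC /mxtrace big_ord1. Qed.

(* Skewness of [L] gives [ipso L (wedge (L g) g) = |L g|^2]. *)
Lemma so_orthogonal_wedge_mulmx L g :
  so L -> (forall x, ipso L (wedge x g) = 0) -> L *m g = 0.
Proof.
move=> skewL orthL; apply: ip_self_eq0.
have := orthL (L *m g); rewrite /ipso /wedge mulmxBr linearB /=.
rewrite !mxtrace_mul_outer ip_mulmx_trmx skewL mulNmx ipNr.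
by move=> orth; rewrite -[RHS]orth; field.
Qed.

End InnerProduct.

Section Brackets.
Variables (R : realType) (n : nat).
Implicit Types (g p : 'cV[R]_n) (F G : 'cV[R]_n -> 'cV[R]_n -> R).

Definition grad_gam F g p : 'cV[R]_n := \col_j dgam F j g p.
Definition grad_p F g p : 'cV[R]_n := \col_j dp F j g p.

Lemma kbracketE eps kappa F G g p :
  kbracket eps kappa F G g p =
  ip (grad_gam F g p) (grad_p G g p) - ip (grad_p F g p) (grad_gam G g p)
  + (eps ^+ 2)^-1 * ip (grad_p F g p) (kappa *m grad_p G g p).
Proof.
rewrite /kbracket !ipE -sumrB; congr (_ + _ * _).
  by apply: eq_bigr => i _; rewrite !mxE.
apply: eq_bigr => i _; rewrite !mxE mulr_sumr.
by apply: eq_bigr => j _; rewrite !mxE; ring.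
Qed.

Lemma grad_gam_gcoord i g p : grad_gam (gcoord i) g p = evec R i.
Proof.
apply/matrixP => j k; rewrite (ord1 k) !mxE /dgam eqxx andbT.
apply: (derive1_quadratic (a := g i 0) (c := 0)) => s.
by rewrite /gcoord !mxE eqxx andbT eq_sym; ring.
Qed.

Lemma grad_p_gcoord i g p : grad_p (gcoord i) g p = 0.
Proof.
apply/matrixP => j k; rewrite !mxE /dp.
by apply: (derive1_quadratic (a := g i 0) (c := 0)) => s; rewrite /gcoord; ring.
Qed.

Lemma grad_gam_pcoord i g p : grad_gam (pcoord i) g p = 0.
Proof.
apply/matrixP => j k; rewrite !mxE /dgam.
by apply: (derive1_quadratic (a := p i 0) (c := 0)) => s; rewrite /pcoord; ring.
Qed.

Lemma grad_p_pcoord i g p : grad_p (pcoord i) g p = evec R i.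
Proof.
apply/matrixP => j k; rewrite (ord1 k) !mxE /dp eqxx andbT.
apply: (derive1_quadratic (a := p i 0) (c := 0)) => s.
by rewrite /pcoord !mxE eqxx andbT eq_sym; ring.
Qed.

Lemma grad_gam_phi1 g p : grad_gam (@phi1 R n) g p = 2%:R *: g.
Proof.
apply/matrixP => j k; rewrite (ord1 k) !mxE /dgam.
apply: (derive1_quadratic (a := ip g g) (c := ip (evec R j) (evec R j))) => s.
by rewrite /phi1 !ipDl !ipDr !ipZl !ipZr ip_evecl ip_evecr; ring.
Qed.

Lemma grad_p_phi1 g p : grad_p (@phi1 R n) g p = 0.
Proof.
apply/matrixP => j k; rewrite !mxE /dp.
by apply: (derive1_quadratic (a := ip g g) (c := 0)) => s; rewrite /phi1; ring.
Qed.

Lemma grad_gam_phi2 g p : grad_gam (@phi2 R n) g p = p.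
Proof.
apply/matrixP => j k; rewrite (ord1 k) !mxE /dgam.
apply: (derive1_quadratic (a := ip g p) (c := 0)) => s.
by rewrite /phi2 ipDl ipZl ip_evecl; ring.
Qed.

Lemma grad_p_phi2 g p : grad_p (@phi2 R n) g p = g.
Proof.
apply/matrixP => j k; rewrite (ord1 k) !mxE /dp.
apply: (derive1_quadratic (a := ip g p) (c := 0)) => s.
by rewrite /phi2 ipDr ipZr ip_evecr; ring.
Qed.

Variables (eps tau : R).

Lemma grad_gam_ham g p : grad_gam (ham eps tau) g p = 0.
Proof.
apply/matrixP => j k; rewrite !mxE /dgam.
apply: (derive1_quadratic (a := ham eps tau g p) (c := 0)) => s.
by rewrite /ham; ring.
Qed.

Lemma grad_p_ham g p : grad_p (ham eps tau) g p = (eps ^+ 2 / tau) *: p.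
Proof.
apply/matrixP => j k; rewrite (ord1 k) !mxE /dp.
apply: (derive1_quadratic (a := ham eps tau g p)
  (c := eps ^+ 2 / (2%:R * tau) * ip (evec R j) (evec R j))) => s.
have -> : tau^-1 = (2%:R * tau)^-1 * 2%:R.
  by rewrite invfM mulrAC mulVf ?pnatr_eq0 // mul1r.
by rewrite /ham !ipDl !ipDr !ipZl !ipZr ip_evecl ip_evecr; ring.
Qed.

End Brackets.

Section DiracFlow.
Variables (R : realType) (n : nat) (eps tau : R) (kappa : 'M[R]_n).
Variables (g p : 'cV[R]_n).
Hypotheses (g_unit : ip g g = 1) (g_orth_p : ip g p = 0).

Let kbracket_simpl := (kbracketE, grad_gam_gcoord, grad_p_gcoord, grad_gam_pcoord,
  grad_p_pcoord, grad_gam_phi1, grad_p_phi1, grad_gam_phi2, grad_p_phi2,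
  grad_gam_ham, grad_p_ham, ip0l, ip0r, mulmx0, ipZl, ipZr, ip_evecl, ip_evecr).

Lemma dbracket_gcoord_ham i :
  dbracket eps kappa (gcoord i) (ham eps tau) g p = eps ^+ 2 / tau * p i 0.
Proof.
rewrite /dbracket !kbracket_simpl [ip p g]ipC g_orth_p g_unit !mxE.
by rewrite !(mulr0, mul0r, subr0, addr0).
Qed.

Lemma dbracket_pcoord_ham i : eps != 0 -> tau != 0 ->
  dbracket eps kappa (pcoord i) (ham eps tau) g p
  = (tau^-1 *: (kappa *m p) + (tau^-1 * ip p (kappa *m g)
       - eps ^+ 2 / tau * ip p p) *: g) i 0.
Proof.
move=> eps_neq0 tau_neq0; rewrite /dbracket !kbracket_simpl [ip p g]ipC g_orth_p g_unit.
rewrite -scalemxAr !mxE !(mulr0, mul0r, subr0, addr0, sub0r).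
by field; rewrite tau_neq0 eps_neq0.
Qed.

End DiracFlow.

Section Kinematics.
Variables (R : realType) (n : nat) (tau eps : R) (kappa : 'M[R]_n).
Hypotheses (tau_neq0 : tau != 0) (eps_neq0 : eps != 0) (so_kappa : so kappa).

Lemma momentum_derivative (x g : 'cV[R]_n) (w dw L : 'M[R]_n) :
  w = wedge x g -> ip g g = 1 -> L *m g = 0 -> tau *: dw = comm kappa w + L ->
  let c := tau / eps ^+ 2 * - eps in
  let P := c *: (w *m g) in
  c *: (dw *m g + w *m (- eps *: (w *m g)))
  = tau^-1 *: (kappa *m P)
    + (tau^-1 * ip P (kappa *m g) - eps ^+ 2 / tau * ip P P) *: g.
Proof.
move=> w_wedge g_unit L_g motion c P.
have dwE : dw = tau^-1 *: (comm kappa w + L).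
  by rewrite -motion scalerA mulVf // scale1r.
have w_g : w *m g = x - ip x g *: g by rewrite w_wedge wedge_mulmx g_unit scale1r.
have w_kappa_g : w *m (kappa *m g) = - ip x (kappa *m g) *: g.
  by rewrite w_wedge wedge_mulmx ip_skew_self // scale0r sub0r scaleNr.
have w_w_g : w *m (w *m g) = - ip x (w *m g) *: g.
  rewrite {1}w_wedge wedge_mulmx w_g ipBr ipZr g_unit [ip g x]ipC mulr1.
  by rewrite subrr scale0r sub0r scaleNr.
have g_kappa_g : ip g (kappa *m g) = 0 by apply: ip_skew_self.
rewrite /P dwE /comm -!scalemxAl -!scalemxAr !mulmxDl !mulNmx -!mulmxA.
rewrite w_kappa_g w_w_g L_g w_g !mulmxBr -!scalemxAr.
rewrite !ipZl !ipZr !ipBl !ipBr !ipZl !ipZr [ip g x]ipC g_unit g_kappa_g.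
move: (kappa *m x) (kappa *m g) => kappa_x kappa_g.
by apply/matrixP => i j; rewrite !mxE /c; field; rewrite eps_neq0 tau_neq0.
Qed.

End Kinematics.

Theorem proposition9p2 (R : realType) (n : nat) (tau eps : R) (kappa : 'M[R]_n)
  (I : set R)
  (omega : R -> 'M[R]_n) (domega : R -> 'M[R]_n)
  (gamma : R -> 'cV[R]_n) (dgamma : R -> 'cV[R]_n)
  (lambda0 : R -> 'M[R]_n) :
  (3 <= n)%N -> 0 < tau -> eps != 0 -> so kappa -> open I ->
  (forall t, I t -> mx_deriv omega t (domega t)) ->
  (forall t, I t -> mx_deriv gamma t (dgamma t)) ->
  (forall t, I t -> ip (gamma t) (gamma t) = 1) ->
  (forall t, I t -> exists x : 'cV[R]_n, omega t = wedge x (gamma t)) ->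
  (forall t, I t -> so (lambda0 t)) ->
  (forall t, I t -> forall x : 'cV[R]_n, ipso (lambda0 t) (wedge x (gamma t)) = 0) ->
  (forall t, I t -> tau *: domega t = comm kappa (omega t) + lambda0 t) ->
  (forall t, I t -> dgamma t = - eps *: (omega t *m gamma t)) ->
  let p := fun t => (tau / eps ^+ 2) *: dgamma t in
  forall t, I t ->
    let mu := tau^-1 * ip (p t) (kappa *m gamma t) - eps ^+ 2 / tau * ip (p t) (p t) in
    [/\ ip (gamma t) (gamma t) = 1 /\ ip (gamma t) (p t) = 0,
        dgamma t = (eps ^+ 2 / tau) *: p t,
        mx_deriv p t (tau^-1 *: (kappa *m p t) + mu *: gamma t)
      & forall i : 'I_n,
          dgamma t i 0 = dbracket eps kappa (gcoord i) (ham eps tau) (gamma t) (p t)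
          /\ (tau^-1 *: (kappa *m p t) + mu *: gamma t) i 0
             = dbracket eps kappa (pcoord i) (ham eps tau) (gamma t) (p t)].
Proof.
move=> _ tau_gt0 eps_neq0 so_kappa open_I d_omega d_gamma gamma_unit omega_wedge
  so_lambda0 lambda0_orth motion d_gammaE p t It mu.
have tau_neq0 : tau != 0 by rewrite gt_eqF.
have gamma_t_unit := gamma_unit t It.
have [x omega_t] := omega_wedge t It.
have lambda0_gamma := so_orthogonal_wedge_mulmx (so_lambda0 t It) (lambda0_orth t It).
set c := tau / eps ^+ 2 * - eps.
have p_omega s : I s -> p s = c *: (omega s *m gamma s).
  by move=> Is; rewrite /p d_gammaE // scalerA.
have gamma_orth_p : ip (gamma t) (p t) = 0.
  by rewrite p_omega // ipZr ip_skew_self ?mulr0 // omega_t; apply: so_wedge.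
have d_gamma_p : dgamma t = (eps ^+ 2 / tau) *: p t.
  rewrite /p scalerA -[tau / _]invf_div mulfV ?scale1r //.
  by rewrite mulf_neq0 ?invr_eq0 ?expf_neq0.
have d_p : mx_deriv p t (c *: (domega t *m gamma t + omega t *m dgamma t)).
  apply: mx_deriv_near (mx_derivZ c (mx_deriv_mulmx (d_omega t It) (d_gamma t It))).
  by apply: filterS (open_nbhs_nbhs (conj open_I It)) => s Is; rewrite p_omega.
have := momentum_derivative tau_neq0 eps_neq0 so_kappa omega_t gamma_t_unit
  lambda0_gamma (motion t It).
rewrite /= -d_gammaE // -(p_omega t It) => d_pE.
split=> //; first by rewrite /mu -d_pE.
move=> i; rewrite dbracket_gcoord_ham ?dbracket_pcoord_ham //.
by rewrite d_gamma_p mxE.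
Qed.
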